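(* If $\{B\}\ \Gamma \vdash M_1 : A$ and $M_1 \longrightarrow_{\mathsf{M}} M_2$, then $[\![M_1]\!] \longrightarrow_{\mathsf{M}} [\![M_2]\!]$.
   Context: $\lambda_{\text{ch}}$ is a concurrent fine-grain call-by-value $\lambda$-calculus with asynchronous channels (types $\mathbf{1}$, $A\to B$, $\mathsf{Chan}(A)$, extended with products, sums, recursive functions and iso-recursive types; primitives $\mathsf{fork}$, $\mathsf{give}$, $\mathsf{take}$, $\mathsf{newCh}$), and $\lambda_{\text{act}}$ the analogous actor calculus (primitives $\mathsf{spawn}$, $\mathsf{send}$, $\mathsf{receive}$, $\mathsf{self}$; arrows $A \to^{C} B$ annotated with mailbox type $C$). $\longrightarrow_{\mathsf{M}}$ is the deterministic functional term reduction ($\beta$-reduction, let-return, pair/case/unroll elimination, closed under evaluation contexts). The judgement $\{B\}\ \Gamma \vdash M : A$ means $M$ is a well-typed $\lambda_{\text{ch}}$ term in which all channels have the single type $B$ (written $\mathsf{Chan}$). $[\![-]\!]$ is the translation from $\lambda_{\text{ch}}$ into $\lambda_{\text{act}}$ (with respect to the channel type $B$): on types $[\![\mathsf{Chan}]\!] = \mathsf{ActorRef}([\![B]\!] + \mathsf{ActorRef}([\![B]\!]))$ and $[\![A\to A']\!] = [\![A]\!] \to^{[\![B]\!]} [\![A']\!]$; it is homomorphic on values and functional terms, and translates $\mathsf{fork}\,M$ to spawning $[\![M]\!]$ and returning unit, $\mathsf{give}\,V\,W$ to $\mathsf{send}\,(\mathsf{inl}\,[\![V]\!])\,[\![W]\!]$,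 $\mathsf{take}\,V$ to sending $\mathsf{inr}$ of own pid to $[\![V]\!]$ then $\mathsf{receive}$, and $\mathsf{newCh}$ to spawning an actor running a channel-emulating loop. *)

From Stdlib Require Import List.
Import ListNotations.

Definition up_ren (xi : nat -> nat) : nat -> nat :=
  fun n => match n with 0 => 0 | S n => S (xi n) end.

(* TyChan is Chan = Chan(B) for the single channel type B.            *)
Inductive ty : Type :=
| TyVar  : nat -> ty
| TyUnit : ty
| TyArr  : ty -> ty -> ty
| TyChan : ty
| TyProd : ty -> ty -> ty
| TySum  : ty -> ty -> ty
| TyMu   : ty -> ty.            (* mu X. A, X = index 0 *)

Fixpoint ty_ren (xi : nat -> nat) (A : ty) : ty :=
  match A with
  | TyVar n => TyVar (xi n)
  | TyUnit => TyUnit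
  | TyArr A1 A2 => TyArr (ty_ren xi A1) (ty_ren xi A2)
  | TyChan => TyChan
  | TyProd A1 A2 => TyProd (ty_ren xi A1) (ty_ren xi A2)
  | TySum A1 A2 => TySum (ty_ren xi A1) (ty_ren xi A2)
  | TyMu A1 => TyMu (ty_ren (up_ren xi) A1)
  end.

Definition ty_up (s : nat -> ty) : nat -> ty :=
  fun n => match n with 0 => TyVar 0 | S n => ty_ren S (s n) end.

Fixpoint ty_subst (s : nat -> ty) (A : ty) : ty :=
  match A with
  | TyVar n => s n
  | TyUnit => TyUnit
  | TyArr A1 A2 => TyArr (ty_subst s A1) (ty_subst s A2)
  | TyChan => TyChan
  | TyProd A1 A2 => TyProd (ty_subst s A1) (ty_subst s A2)
  | TySum A1 A2 => TySum (ty_subst s A1) (ty_subst s A2)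
  | TyMu A1 => TyMu (ty_subst (ty_up s) A1)
  end.

Definition unfold_mu (A : ty) : ty :=
  ty_subst (fun n => match n with 0 => TyMu A | S k => TyVar k end) A.

Module Ch.

Inductive val : Type :=
| VVar  : nat -> val
| VUnit : val
| VLam  : tm -> val
| VRec  : tm -> val              (* rec f(x). M ; x = 0, f = 1 *)
| VPair : val -> val -> val
| VInl  : val -> val
| VInr  : val -> val
| VRoll : val -> val
with tm : Type :=
| App     : val -> val -> tm
| Let     : tm -> tm -> tm
| Ret     : val -> tm
| LetPair : val -> tm -> tm      (* let (x,y) = V in M ; y = 0, x = 1 *)
| Case    : val -> tm -> tm -> tm
| Unroll  : val -> tm
| Fork    : tm -> tm
| Give    : val -> val -> tm
| Take    : val -> tm
| NewCh   : tm.

Fixpoint ren_val (xi : nat -> nat) (v : val) : val :=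
  match v with
  | VVar n => VVar (xi n)
  | VUnit => VUnit
  | VLam M => VLam (ren_tm (up_ren xi) M)
  | VRec M => VRec (ren_tm (up_ren (up_ren xi)) M)
  | VPair V W => VPair (ren_val xi V) (ren_val xi W)
  | VInl V => VInl (ren_val xi V)
  | VInr V => VInr (ren_val xi V)
  | VRoll V => VRoll (ren_val xi V)
  end
with ren_tm (xi : nat -> nat) (M : tm) : tm :=
  match M with
  | App V W => App (ren_val xi V) (ren_val xi W)
  | Let M N => Let (ren_tm xi M) (ren_tm (up_ren xi) N)
  | Ret V => Ret (ren_val xi V)
  | LetPair V N => LetPair (ren_val xi V) (ren_tm (up_ren (up_ren xi)) N)
  | Case V N1 N2 => Case (ren_val xi V) (ren_tm (up_ren xi) N1) (ren_tm (up_ren xi) N2)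
  | Unroll V => Unroll (ren_val xi V)
  | Fork N => Fork (ren_tm xi N)
  | Give V W => Give (ren_val xi V) (ren_val xi W)
  | Take V => Take (ren_val xi V)
  | NewCh => NewCh
  end.

Definition up_sub (s : nat -> val) : nat -> val :=
  fun n => match n with 0 => VVar 0 | S n => ren_val S (s n) end.

Fixpoint subst_val (s : nat -> val) (v : val) : val :=
  match v with
  | VVar n => s n
  | VUnit => VUnit
  | VLam M => VLam (subst_tm (up_sub s) M)
  | VRec M => VRec (subst_tm (up_sub (up_sub s)) M)
  | VPair V W => VPair (subst_val s V) (subst_val s W)
  | VInl V => VInl (subst_val s V)
  | VInr V => VInr (subst_val s V)
  | VRoll V => VRoll (subst_val s V)
  end
with subst_tm (s : nat -> val) (M : tm) : tm :=
  match M with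
  | App V W => App (subst_val s V) (subst_val s W)
  | Let M N => Let (subst_tm s M) (subst_tm (up_sub s) N)
  | Ret V => Ret (subst_val s V)
  | LetPair V N => LetPair (subst_val s V) (subst_tm (up_sub (up_sub s)) N)
  | Case V N1 N2 => Case (subst_val s V) (subst_tm (up_sub s) N1) (subst_tm (up_sub s) N2)
  | Unroll V => Unroll (subst_val s V)
  | Fork N => Fork (subst_tm s N)
  | Give V W => Give (subst_val s V) (subst_val s W)
  | Take V => Take (subst_val s V)
  | NewCh => NewCh
  end.

Definition scons (V : val) (s : nat -> val) : nat -> val :=
  fun n => match n with 0 => V | S k => s k end.

Definition subst1 (V : val) (M : tm) : tm := subst_tm (scons V VVar) M.
Definition subst2 (V W : val) (M : tm) : tm := subst_tm (scons V (scons W VVar)) M.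

Inductive step : tm -> tm -> Prop :=
| st_lam : forall M V, step (App (VLam M) V) (subst1 V M)
| st_rec : forall M V, step (App (VRec M) V) (subst2 V (VRec M) M)
| st_let_ret : forall V N, step (Let (Ret V) N) (subst1 V N)
| st_pair : forall V W N, step (LetPair (VPair V W) N) (subst2 W V N)
| st_case_inl : forall V N1 N2, step (Case (VInl V) N1 N2) (subst1 V N1)
| st_case_inr : forall V N1 N2, step (Case (VInr V) N1 N2) (subst1 V N2)
| st_unroll : forall V, step (Unroll (VRoll V)) (Ret V)
| st_let_ctx : forall M M' N, step M M' -> step (Let M N) (Let M' N).

Inductive vtyped (B : ty) : list ty -> val -> ty -> Prop :=
| tv_var : forall G n A, nth_error G n = Some A -> vtyped B G (VVar n) A
| tv_unit : forall G, vtyped B G VUnit TyUnit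
| tv_lam : forall G M A A', ttyped B (A :: G) M A' -> vtyped B G (VLam M) (TyArr A A')
| tv_rec : forall G M A A', ttyped B (A :: TyArr A A' :: G) M A' ->
    vtyped B G (VRec M) (TyArr A A')
| tv_pair : forall G V W A1 A2, vtyped B G V A1 -> vtyped B G W A2 ->
    vtyped B G (VPair V W) (TyProd A1 A2)
| tv_inl : forall G V A1 A2, vtyped B G V A1 -> vtyped B G (VInl V) (TySum A1 A2)
| tv_inr : forall G V A1 A2, vtyped B G V A2 -> vtyped B G (VInr V) (TySum A1 A2)
| tv_roll : forall G V A, vtyped B G V (unfold_mu A) -> vtyped B G (VRoll V) (TyMu A)
with ttyped (B : ty) : list ty -> tm -> ty -> Prop :=
| tt_app : forall G V W A A', vtyped B G V (TyArr A A') -> vtyped B G W A ->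
    ttyped B G (App V W) A'
| tt_let : forall G M N A A', ttyped B G M A -> ttyped B (A :: G) N A' ->
    ttyped B G (Let M N) A'
| tt_ret : forall G V A, vtyped B G V A -> ttyped B G (Ret V) A
| tt_letpair : forall G V N A1 A2 A', vtyped B G V (TyProd A1 A2) ->
    ttyped B (A2 :: A1 :: G) N A' -> ttyped B G (LetPair V N) A'
| tt_case : forall G V N1 N2 A1 A2 A', vtyped B G V (TySum A1 A2) ->
    ttyped B (A1 :: G) N1 A' -> ttyped B (A2 :: G) N2 A' ->
    ttyped B G (Case V N1 N2) A'
| tt_unroll : forall G V A, vtyped B G V (TyMu A) ->
    ttyped B G (Unroll V) (unfold_mu A)
| tt_fork : forall G M, ttyped B G M TyUnit -> ttyped B G (Fork M) TyUnit
| tt_give : forall G V W, vtyped B G V B -> vtyped B G W TyChan ->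
    ttyped B G (Give V W) TyUnit
| tt_take : forall G V, vtyped B G V TyChan -> ttyped B G (Take V) B
| tt_newch : forall G, ttyped B G NewCh TyChan.

End Ch.

Module Act.

Inductive val : Type :=
| VVar  : nat -> val
| VUnit : val
| VLam  : tm -> val
| VRec  : tm -> val
| VPair : val -> val -> val
| VInl  : val -> val
| VInr  : val -> val
| VRoll : val -> val
with tm : Type :=
| App     : val -> val -> tm
| Let     : tm -> tm -> tm
| Ret     : val -> tm
| LetPair : val -> tm -> tm
| Case    : val -> tm -> tm -> tm
| Unroll  : val -> tm
| Spawn   : tm -> tm
| Send    : val -> val -> tm     (* send V W : send message V to actor W *)
| Receive : tm
| Self    : tm.

Fixpoint ren_val (xi : nat -> nat) (v : val) : val :=
  match v with
  | VVar n => VVar (xi n)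
  | VUnit => VUnit
  | VLam M => VLam (ren_tm (up_ren xi) M)
  | VRec M => VRec (ren_tm (up_ren (up_ren xi)) M)
  | VPair V W => VPair (ren_val xi V) (ren_val xi W)
  | VInl V => VInl (ren_val xi V)
  | VInr V => VInr (ren_val xi V)
  | VRoll V => VRoll (ren_val xi V)
  end
with ren_tm (xi : nat -> nat) (M : tm) : tm :=
  match M with
  | App V W => App (ren_val xi V) (ren_val xi W)
  | Let M N => Let (ren_tm xi M) (ren_tm (up_ren xi) N)
  | Ret V => Ret (ren_val xi V)
  | LetPair V N => LetPair (ren_val xi V) (ren_tm (up_ren (up_ren xi)) N)
  | Case V N1 N2 => Case (ren_val xi V) (ren_tm (up_ren xi) N1) (ren_tm (up_ren xi) N2)
  | Unroll V => Unroll (ren_val xi V)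
  | Spawn N => Spawn (ren_tm xi N)
  | Send V W => Send (ren_val xi V) (ren_val xi W)
  | Receive => Receive
  | Self => Self
  end.

Definition up_sub (s : nat -> val) : nat -> val :=
  fun n => match n with 0 => VVar 0 | S n => ren_val S (s n) end.

Fixpoint subst_val (s : nat -> val) (v : val) : val :=
  match v with
  | VVar n => s n
  | VUnit => VUnit
  | VLam M => VLam (subst_tm (up_sub s) M)
  | VRec M => VRec (subst_tm (up_sub (up_sub s)) M)
  | VPair V W => VPair (subst_val s V) (subst_val s W)
  | VInl V => VInl (subst_val s V)
  | VInr V => VInr (subst_val s V)
  | VRoll V => VRoll (subst_val s V)
  end
with subst_tm (s : nat -> val) (M : tm) : tm :=
  match M with
  | App V W => App (subst_val s V) (subst_val s W)
  | Let M N => Let (subst_tm s M) (subst_tm (up_sub s) N)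
  | Ret V => Ret (subst_val s V)
  | LetPair V N => LetPair (subst_val s V) (subst_tm (up_sub (up_sub s)) N)
  | Case V N1 N2 => Case (subst_val s V) (subst_tm (up_sub s) N1) (subst_tm (up_sub s) N2)
  | Unroll V => Unroll (subst_val s V)
  | Spawn N => Spawn (subst_tm s N)
  | Send V W => Send (subst_val s V) (subst_val s W)
  | Receive => Receive
  | Self => Self
  end.

Definition scons (V : val) (s : nat -> val) : nat -> val :=
  fun n => match n with 0 => V | S k => s k end.

Definition subst1 (V : val) (M : tm) : tm := subst_tm (scons V VVar) M.
Definition subst2 (V W : val) (M : tm) : tm := subst_tm (scons V (scons W VVar)) M.

Inductive step : tm -> tm -> Prop :=
| st_lam : forall M V, step (App (VLam M) V) (subst1 V M)
| st_rec : forall M V, step (App (VRec M) V) (subst2 V (VRec M) M)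
| st_let_ret : forall V N, step (Let (Ret V) N) (subst1 V N)
| st_pair : forall V W N, step (LetPair (VPair V W) N) (subst2 W V N)
| st_case_inl : forall V N1 N2, step (Case (VInl V) N1 N2) (subst1 V N1)
| st_case_inr : forall V N1 N2, step (Case (VInr V) N1 N2) (subst1 V N2)
| st_unroll : forall V, step (Unroll (VRoll V)) (Ret V)
| st_let_ctx : forall M M' N, step M M' -> step (Let M N) (Let M' N).

(* iso-recursive lists:  [] = roll (inl ()),  v :: vs = roll (inr (v, vs)) *)
Definition vnil : val := VRoll (VInl VUnit).
Definition vcons (v vs : val) : val := VRoll (VInr (VPair v vs)).

(* append = rec app(p). let (l, ys) = p in let u <= unroll l in
     case u { inl _ -> return ys
            ; inr c -> let (h, t) = c in let r <= app (t, ys) in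
                       return (h :: r) } *)
Definition append : val :=
  VRec (LetPair (VVar 0)
   (Let (Unroll (VVar 1))
    (Case (VVar 0)
      (Ret (VVar 2))
      (LetPair (VVar 0)
        (Let (App (VVar 7) (VPair (VVar 0) (VVar 4)))
          (Ret (vcons (VVar 2) (VVar 0)))))))).

(* drain = \x. let (vals, pids) = x in
     case vals { [] -> return (vals, pids)
               ; v :: vs -> case pids { [] -> return (vals, pids)
                                      ; pid :: pids' -> send v pid;
                                                        return (vs, pids') } } *)
Definition drain : val :=
  VLam (LetPair (VVar 0)
   (Let (Unroll (VVar 1))
    (Case (VVar 0)
      (Ret (VPair (VVar 3) (VVar 2)))
      (LetPair (VVar 0)
       (Let (Unroll (VVar 4))
        (Case (VVar 0)
          (Ret (VPair (VVar 7) (VVar 6)))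
          (LetPair (VVar 0)
            (Let (Send (VVar 5) (VVar 1))
              (Ret (VPair (VVar 5) (VVar 1))))))))))).

(* body = rec g(state). let recvVal <= receive in let (vals, pids) = state in
     case recvVal { inl v   -> let vals' <= vals ++ [v] in
                               let st <= drain (vals', pids) in g st
                  ; inr pid -> let pids' <= pids ++ [pid] in
                               let st <= drain (vals, pids') in g st } *)
Definition chan_body : val :=
  VRec (Let Receive
   (LetPair (VVar 1)
    (Case (VVar 2)
      (Let (App append (VPair (VVar 2) (vcons (VVar 0) vnil)))
        (Let (App drain (VPair (VVar 0) (VVar 2)))
          (App (VVar 7) (VVar 0))))
      (Let (App append (VPair (VVar 1) (vcons (VVar 0) vnil)))
        (Let (App drain (VPair (VVar 3) (VVar 0)))
          (App (VVar 7) (VVar 0))))))).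

End Act.

Fixpoint tr_val (v : Ch.val) : Act.val :=
  match v with
  | Ch.VVar n => Act.VVar n
  | Ch.VUnit => Act.VUnit
  | Ch.VLam M => Act.VLam (tr_tm M)
  | Ch.VRec M => Act.VRec (tr_tm M)
  | Ch.VPair V W => Act.VPair (tr_val V) (tr_val W)
  | Ch.VInl V => Act.VInl (tr_val V)
  | Ch.VInr V => Act.VInr (tr_val V)
  | Ch.VRoll V => Act.VRoll (tr_val V)
  end
with tr_tm (M : Ch.tm) : Act.tm :=
  match M with
  | Ch.App V W => Act.App (tr_val V) (tr_val W)
  | Ch.Let M N => Act.Let (tr_tm M) (tr_tm N)
  | Ch.Ret V => Act.Ret (tr_val V)
  | Ch.LetPair V N => Act.LetPair (tr_val V) (tr_tm N)
  | Ch.Case V N1 N2 => Act.Case (tr_val V) (tr_tm N1) (tr_tm N2)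
  | Ch.Unroll V => Act.Unroll (tr_val V)
  | Ch.Fork N => Act.Let (Act.Spawn (tr_tm N)) (Act.Ret Act.VUnit)
  | Ch.Give V W => Act.Send (Act.VInl (tr_val V)) (tr_val W)
  | Ch.Take V =>
      Act.Let Act.Self
        (Act.Let (Act.Send (Act.VInr (Act.VVar 0)) (Act.ren_val S (tr_val V)))
                 Act.Receive)
  | Ch.NewCh => Act.Spawn (Act.App Act.chan_body (Act.VPair Act.vnil Act.vnil))
  end.

(* The translation is homomorphic on values and on all the term formers that
   take part in functional reduction, so a redex of -->_M is translated to
   the corresponding redex of lambda_act, provided translation commutes with
   substitution.  The only case needing care is [[take V]], which puts [[V]]
   under the extra binder of [self] and thus under a shift; it commutes with
   renaming and substitution because shifting does. *)


Scheme act_val_ind' := Induction for Act.val Sort Prop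
with act_tm_ind' := Induction for Act.tm Sort Prop.
Combined Scheme act_mut from act_val_ind', act_tm_ind'.

Scheme ch_val_ind' := Induction for Ch.val Sort Prop
with ch_tm_ind' := Induction for Ch.tm Sort Prop.
Combined Scheme ch_mut from ch_val_ind', ch_tm_ind'.

Lemma up_ren_comp (xi zeta rho : nat -> nat) :
  (forall n, xi (zeta n) = rho n) ->
  forall n, up_ren xi (up_ren zeta n) = up_ren rho n.
Proof. intros H [|n]; cbn; congruence. Qed.

Lemma act_ren_ren :
  (forall v xi zeta rho, (forall n, xi (zeta n) = rho n) ->
     Act.ren_val xi (Act.ren_val zeta v) = Act.ren_val rho v) /\
  (forall t xi zeta rho, (forall n, xi (zeta n) = rho n) ->
     Act.ren_tm xi (Act.ren_tm zeta t) = Act.ren_tm rho t).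
Proof. apply act_mut; intros; cbn; auto; f_equal; eauto using up_ren_comp. Qed.

Lemma act_ren_shift (xi : nat -> nat) (v : Act.val) :
  Act.ren_val (up_ren xi) (Act.ren_val S v) = Act.ren_val S (Act.ren_val xi v).
Proof.
  rewrite !(proj1 act_ren_ren v _ _ (fun n => S (xi n))); reflexivity.
Qed.

Lemma act_up_sub_ren (s s' : nat -> Act.val) (xi : nat -> nat) :
  (forall n, s (xi n) = s' n) ->
  forall n, Act.up_sub s (up_ren xi n) = Act.up_sub s' n.
Proof. intros H [|n]; cbn; congruence. Qed.

Lemma act_subst_ren :
  (forall v s xi s', (forall n, s (xi n) = s' n) ->
     Act.subst_val s (Act.ren_val xi v) = Act.subst_val s' v) /\
  (forall t s xi s', (forall n, s (xi n) = s' n) ->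
     Act.subst_tm s (Act.ren_tm xi t) = Act.subst_tm s' t).
Proof. apply act_mut; intros; cbn; auto; f_equal; eauto using act_up_sub_ren. Qed.

Lemma act_ren_up_sub (xi : nat -> nat) (s s' : nat -> Act.val) :
  (forall n, Act.ren_val xi (s n) = s' n) ->
  forall n, Act.ren_val (up_ren xi) (Act.up_sub s n) = Act.up_sub s' n.
Proof. intros H [|n]; cbn; rewrite ?act_ren_shift, ?H; reflexivity. Qed.

Lemma act_ren_subst :
  (forall v xi s s', (forall n, Act.ren_val xi (s n) = s' n) ->
     Act.ren_val xi (Act.subst_val s v) = Act.subst_val s' v) /\
  (forall t xi s s', (forall n, Act.ren_val xi (s n) = s' n) ->
     Act.ren_tm xi (Act.subst_tm s t) = Act.subst_tm s' t).
Proof. apply act_mut; intros; cbn; auto; f_equal; eauto using act_ren_up_sub. Qed.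

Lemma act_subst_shift (s : nat -> Act.val) (v : Act.val) :
  Act.subst_val (Act.up_sub s) (Act.ren_val S v) =
  Act.ren_val S (Act.subst_val s v).
Proof.
  rewrite (proj1 act_subst_ren v _ _ (fun n => Act.ren_val S (s n))) by reflexivity.
  symmetry; apply (proj1 act_ren_subst); reflexivity.
Qed.

Lemma tr_ren :
  (forall v xi, tr_val (Ch.ren_val xi v) = Act.ren_val xi (tr_val v)) /\
  (forall t xi, tr_tm (Ch.ren_tm xi t) = Act.ren_tm xi (tr_tm t)).
Proof.
  apply ch_mut; intros; cbn; rewrite ?act_ren_shift; repeat (f_equal; auto).
Qed.

Lemma tr_up_sub (s : nat -> Ch.val) (s' : nat -> Act.val) :
  (forall n, tr_val (s n) = s' n) ->
  forall n, tr_val (Ch.up_sub s n) = Act.up_sub s' n.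
Proof. intros H [|n]; cbn; rewrite ?(proj1 tr_ren), ?H; reflexivity. Qed.

Lemma tr_subst :
  (forall v s s', (forall n, tr_val (s n) = s' n) ->
     tr_val (Ch.subst_val s v) = Act.subst_val s' (tr_val v)) /\
  (forall t s s', (forall n, tr_val (s n) = s' n) ->
     tr_tm (Ch.subst_tm s t) = Act.subst_tm s' (tr_tm t)).
Proof.
  apply ch_mut; intros; cbn; rewrite ?act_subst_shift; auto;
    repeat (f_equal; eauto using tr_up_sub).
Qed.

Lemma tr_subst1 (V : Ch.val) (M : Ch.tm) :
  tr_tm (Ch.subst1 V M) = Act.subst1 (tr_val V) (tr_tm M).
Proof. apply (proj2 tr_subst); intros [|n]; reflexivity. Qed.

Lemma tr_subst2 (V W : Ch.val) (M : Ch.tm) :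
  tr_tm (Ch.subst2 V W M) = Act.subst2 (tr_val V) (tr_val W) (tr_tm M).
Proof. apply (proj2 tr_subst); intros [|[|n]]; reflexivity. Qed.

Lemma tr_step (M1 M2 : Ch.tm) :
  Ch.step M1 M2 -> Act.step (tr_tm M1) (tr_tm M2).
Proof.
  induction 1; rewrite ?tr_subst1, ?tr_subst2; cbn [tr_tm tr_val];
    constructor; assumption.
Qed.

Theorem lemma25 (B : ty) (G : list ty) (M1 M2 : Ch.tm) (A : ty) :
  Ch.ttyped B G M1 A -> Ch.step M1 M2 -> Act.step (tr_tm M1) (tr_tm M2).
Proof. intros _; apply tr_step. Qed.
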